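(* Let $F$ be a graph and let $(G,\varphi)$ and $(H,\phi)$ be two $k$-token reconstructions of $F$. Then $G\simeq H$ if and only if there exists an automorphism $\psi$ of $F$ such that $\mathcal{R}_\phi=\{\psi(X):X\in\mathcal{R}_\varphi\}$.
   Context: $F_k(G)$ is the graph on the $k$-subsets of $V(G)$ with $A,B$ adjacent iff $A\triangle B$ is an edge of $G$. A $k$-token reconstruction of $F$ is a pair $(G',\varphi)$ with $\varphi$ an isomorphism $F\to F_k(G')$. For $u\in V(G)$, $\kappa_G(u,k)=\{A\in V(F_k(G)):u\in A\}$, and for a reconstruction $(G,\varphi)$, $\mathcal{R}_\varphi=\{\varphi^{-1}(\kappa_G(u,k)):u\in V(G)\}$ (similarly $\mathcal{R}_\phi=\{\phi^{-1}(\kappa_H(u,k)):u\in V(H)\}$). *)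

From mathcomp Require Import all_boot.
Set Implicit Arguments. Unset Strict Implicit. Unset Printing Implicit Defensive.

Definition simple_graph (T : finType) (e : rel T) : Prop :=
  symmetric e /\ irreflexive e.

(* The k-subsets of W: vertex set of the token graph F_k(G). *)
Definition tok (W : finType) (k : nat) := {A : {set W} | #|A| == k}.

Definition token_adj (W : finType) (e : rel W) (k : nat) : rel (tok W k) :=
  fun A B => [exists u : W, exists v : W,
     e u v && ((val A :\: val B) :|: (val B :\: val A) == [set u; v])].

Definition is_iso (T1 T2 : finType) (e1 : rel T1) (e2 : rel T2) (f : T1 -> T2) : Prop :=
  bijective f /\ forall x y, e2 (f x) (f y) = e1 x y.

Definition isomorphic (T1 T2 : finType) (e1 : rel T1) (e2 : rel T2) : Prop :=
  exists f : T1 -> T2, is_iso e1 e2 f.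

Definition token_reconstruction (V W : finType) (eF : rel V) (eG : rel W) (k : nat)
  (phi : V -> tok W k) : Prop := @is_iso V (tok W k) eF (@token_adj W eG k) phi.

Definition kappa (W : finType) (k : nat) (u : W) : {set tok W k} :=
  [set A : tok W k | u \in val A].

Definition Rset (V W : finType) (k : nat) (phi : V -> tok W k) : {set {set V}} :=
  [set phi @^-1: @kappa W k u | u : W].

From mathcomp Require Import all_boot zify.
Set Implicit Arguments. Unset Strict Implicit. Unset Printing Implicit Defensive.

(* An isomorphism f : G -> H maps k-sets to k-sets and preserves token adjacency,
   so through the reconstructions it induces an automorphism psi of F sending
   phiG^-1(kappa_G(u)) to phiH^-1(kappa_H(f u)).  Conversely, for 0 < k < n the
   map u |-> phi^-1(kappa(u)) is injective, so an automorphism psi matching R_phiG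
   with R_phiH yields a bijection g : V(G) -> V(H) with phiH(psi x) = g(phiG x).
   This g is an isomorphism: for any (k-1)-set C avoiding u and u', the k-sets
   u + C and u' + C are adjacent in the token graph exactly when u ~ u'. *)

Section TokenRelation.
Variables (W : finType) (e : rel W).

Definition token_rel (A B : {set W}) : bool :=
  [exists u, exists v, e u v && ((A :\: B) :|: (B :\: A) == [set u; v])].

Lemma token_adjE k (a b : tok W k) : token_adj e a b = token_rel (val a) (val b).
Proof. by []. Qed.

Hypotheses (e_sym : symmetric e) (e_irr : irreflexive e).

Lemma token_rel_setU1 (u u' : W) (C : {set W}) :
  u != u' -> u \notin C -> u' \notin C -> token_rel (u |: C) (u' |: C) = e u u'.
Proof.
move=> uu' uC u'C; rewrite /token_rel.
have -> : ((u |: C) :\: (u' |: C)) :|: ((u' |: C) :\: (u |: C)) = [set u; u'].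
  apply/setP => z; rewrite !inE.
  have [->|zu] := eqVneq z u; first by rewrite (negbTE uC) (negbTE uu').
  have [->|zu'] := eqVneq z u'; first by rewrite (negbTE u'C).
  by case: (z \in C).
apply/existsP/idP => [[x /existsP [y /andP [exy /eqP xy_uu']]]|euu']; last first.
  by exists u; apply/existsP; exists u'; rewrite euu' eqxx.
have x_uu' : x \in [set u; u'] by rewrite xy_uu' !inE eqxx.
have y_uu' : y \in [set u; u'] by rewrite xy_uu' !inE eqxx orbT.
move: exy; case/set2P: x_uu' => ->; case/set2P: y_uu' => ->.
all: by rewrite ?e_irr // e_sym.
Qed.

End TokenRelation.

Lemma token_rel_imset (W1 W2 : finType) (eG : rel W1) (eH : rel W2) (f : W1 -> W2) :
  is_iso eG eH f -> forall A B : {set W1}, token_rel eH (f @: A) (f @: B) = token_rel eG A B.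
Proof.
move=> [[fi fK fiK] f_edge] A B; have f_inj := can_inj fK; rewrite /token_rel.
have -> : (f @: A :\: f @: B) :|: (f @: B :\: f @: A) = f @: ((A :\: B) :|: (B :\: A)).
  by apply/setP => v; rewrite -[v]fiK !inE !mem_imset // !inE.
apply/existsP/existsP.
  case=> u /existsP [v /andP [euv /eqP uvE]]; exists (fi u); apply/existsP; exists (fi v).
  rewrite -f_edge !fiK euv; apply/eqP/(imset_inj f_inj).
  by rewrite uvE imsetU1 imset_set1 !fiK.
case=> x /existsP [y /andP [exy /eqP xyE]]; exists (f x); apply/existsP; exists (f y).
by rewrite f_edge exy xyE imsetU1 imset_set1 eqxx.
Qed.

Lemma exists_setU1_card (W : finType) (u u' : W) k :
  0 < k < #|W| -> exists C : {set W}, [/\ u \notin C, u' \notin C,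
                                        #|u |: C| == k & #|u' |: C| == k].
Proof.
move=> k_bounds.
have /card_geqP [s [s_uniq s_size s_sub]] : k.-1 <= #|~: [set u; u']|.
  by move: k_bounds; rewrite -(cardsC [set u; u']) cards2; case: (u != u') => /=; lia.
have s_avoid x : x \in [set u; u'] -> x \notin s.
  by move=> x_uu'; apply/negP => /s_sub; rewrite inE x_uu'.
have u_s : u \notin s by rewrite s_avoid // !inE eqxx.
have u'_s : u' \notin s by rewrite s_avoid // !inE eqxx orbT.
exists [set x in s]; rewrite !cardsU1 !inE u_s u'_s cardsE (card_uniqP s_uniq).
by split=> //; apply/eqP; lia.
Qed.

Lemma iso_of_token_rel (W1 W2 : finType) (eG : rel W1) (eH : rel W2) k (g : W1 -> W2) :
  simple_graph eG -> simple_graph eH -> 0 < k < #|W1| -> injective g ->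
  (forall a b : tok W1 k, token_rel eH (g @: val a) (g @: val b) = token_adj eG a b) ->
  forall u u', eH (g u) (g u') = eG u u'.
Proof.
move=> [eG_sym eG_irr] [eH_sym eH_irr] k_bounds g_inj g_tok u u'.
have [<-|uu'] := eqVneq u u'; first by rewrite eG_irr eH_irr.
have [C [uC u'C card_u card_u']] := exists_setU1_card u u' k_bounds.
have := g_tok (exist _ (u |: C) card_u) (exist _ (u' |: C) card_u').
by rewrite token_adjE /= !imsetU1 !token_rel_setU1 ?mem_imset ?(inj_eq g_inj).
Qed.

Lemma eq_range_bijP (A B C : finType) (F1 : A -> C) (F2 : B -> C) :
  injective F1 -> injective F2 ->
  [set F1 a | a : A] = [set F2 b | b : B] <->
  exists2 g : B -> A, bijective g & forall b, F1 (g b) = F2 b.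
Proof.
move=> F1_inj F2_inj; split=> [range_eq | [g [gi gK giK] F1g]].
- have in_range1 b : exists a, F1 a == F2 b.
    have : F2 b \in [set F1 a | a : A] by rewrite range_eq imset_f.
    by case/imsetP => a _ ->; exists a.
  have in_range2 a : exists b, F2 b == F1 a.
    have : F1 a \in [set F2 b | b : B] by rewrite -range_eq imset_f.
    by case/imsetP => b _ ->; exists b.
  pose g b := xchoose (in_range1 b); pose gi a := xchoose (in_range2 a).
  have F1g b : F1 (g b) = F2 b := eqP (xchooseP (in_range1 b)).
  have F2gi a : F2 (gi a) = F1 a := eqP (xchooseP (in_range2 a)).
  exists g => //; exists gi => [b | a]; [apply: F2_inj | apply: F1_inj].
    by rewrite F2gi F1g.
  by rewrite F1g F2gi.
- apply/setP => c; apply/imsetP/imsetP => [[a _ ->] | [b _ ->]].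
    by exists (gi a); rewrite // -F1g giK.
  by exists (g b); rewrite // F1g.
Qed.

Definition kappa_pre (V W : finType) k (phi : V -> tok W k) (u : W) : {set V} :=
  phi @^-1: kappa k u.

Lemma mem_kappa_pre (V W : finType) k (phi : V -> tok W k) u x :
  (x \in kappa_pre phi u) = (u \in val (phi x)).
Proof. by rewrite !inE. Qed.

Lemma kappa_pre_inj (V W : finType) k (phi : V -> tok W k) :
  bijective phi -> 0 < k < #|W| -> injective (kappa_pre phi).
Proof.
move=> [phii _ phiiK] k_bounds u u' kappa_uu'; apply/eqP; apply: contraT => uu'.
have [C [uC u'C card_u _]] := exists_setU1_card u u' k_bounds.
move/setP/(_ (phii (exist _ (u |: C) card_u))): kappa_uu'.
by rewrite !mem_kappa_pre phiiK /= !inE eqxx eq_sym (negbTE uu') (negbTE u'C).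
Qed.

Section Reconstructions.
Variables (V W1 W2 : finType) (eF : rel V) (eG : rel W1) (eH : rel W2) (k : nat).
Variables (phiG : V -> tok W1 k) (phiH : V -> tok W2 k).
Hypotheses (recG : token_reconstruction eF eG phiG) (recH : token_reconstruction eF eH phiH).

Definition induced_by (psi : V -> V) (g : W1 -> W2) : Prop :=
  forall x, val (phiH (psi x)) = g @: val (phiG x).

Lemma induced_by_kappa_preP psi g : bijective psi -> bijective g ->
  induced_by psi g <-> forall u, kappa_pre phiH (g u) = psi @: kappa_pre phiG u.
Proof.
move=> [psii psiK psiiK] [gi gK giK]; have psi_inj := can_inj psiK; have g_inj := can_inj gK.
split=> [psi_g u | psi_kappa x].
- apply/setP => y; rewrite -[y]psiiK mem_imset // !mem_kappa_pre psi_g mem_imset //.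
- apply/setP => v; rewrite -[v]giK mem_imset // -!mem_kappa_pre psi_kappa mem_imset //.
Qed.

Lemma Rset_imsetP (psi : V -> V) : injective psi -> 0 < k < #|W1| -> 0 < k < #|W2| ->
  Rset phiH = [set psi @: X | X : {set V} in Rset phiG] <->
  exists2 g, bijective g & forall u, kappa_pre phiH (g u) = psi @: kappa_pre phiG u.
Proof.
move=> psi_inj kG kH.
rewrite (_ : Rset _ = [set kappa_pre phiH v | v : W2]) // -imset_comp.
apply: eq_range_bijP.
  exact: kappa_pre_inj (proj1 recH) kH.
by move=> u u' /(imset_inj psi_inj); apply: (kappa_pre_inj (proj1 recG) kG).
Qed.

Lemma induced_by_autP psi g :
  simple_graph eG -> simple_graph eH -> 0 < k < #|W1| -> bijective g -> induced_by psi g ->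
  (forall x y, eF (psi x) (psi y) = eF x y) <-> (forall u u', eH (g u) (g u') = eG u u').
Proof.
move=> eG_simple eH_simple kG g_bij psi_g.
have [[phiGi _ phiGiK] phiG_edge] := recG.
have tokE x y : eF (psi x) (psi y) = token_rel eH (g @: val (phiG x)) (g @: val (phiG y)).
  by rewrite -(proj2 recH) token_adjE !psi_g.
split=> [psi_edge | g_edge x y].
- apply: (iso_of_token_rel eG_simple eH_simple kG (bij_inj g_bij)) => a b.
  by rewrite -[a]phiGiK -[b]phiGiK -tokE psi_edge phiG_edge.
- by rewrite tokE (token_rel_imset (conj g_bij g_edge)) -token_adjE phiG_edge.
Qed.

Lemma exists_induced_by f : injective f -> exists2 psi, bijective psi & induced_by psi f.
Proof.
move=> f_inj; have [[phiHi _ phiHiK] _] := recH.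
have card_imset_tok (a : tok W1 k) : #|f @: val a| == k by rewrite card_imset // (valP a).
pose psi x := phiHi (exist _ (f @: val (phiG x)) (card_imset_tok (phiG x))).
have psi_f : induced_by psi f by move=> x; rewrite /psi phiHiK.
exists psi => //; apply: injF_bij => x y /(congr1 (val \o phiH)) /=.
by rewrite !psi_f => /(imset_inj f_inj) /val_inj /(bij_inj (proj1 recG)).
Qed.

End Reconstructions.

Theorem proposition15 (V W1 W2 : finType) (eF : rel V) (eG : rel W1) (eH : rel W2)
  (k : nat) (phiG : V -> tok W1 k) (phiH : V -> tok W2 k) :
  simple_graph eF -> simple_graph eG -> simple_graph eH ->
  0 < k < #|W1| -> 0 < k < #|W2| ->
  token_reconstruction eF eG phiG -> token_reconstruction eF eH phiH ->
  (isomorphic eG eH <->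
   exists psi : V -> V, is_iso eF eF psi /\
     Rset phiH = [set psi @: X | X : {set V} in Rset phiG]).
Proof.
move=> _ eG_simple eH_simple kG kH recG recH.
split=> [[f [f_bij f_edge]] | [psi [[psi_bij psi_edge] R_psi]]].
- have [psi psi_bij psi_f] := exists_induced_by recG recH (bij_inj f_bij).
  exists psi; split.
    by split=> //; apply/(induced_by_autP recG recH eG_simple eH_simple kG f_bij psi_f).
  apply/(Rset_imsetP recG recH (bij_inj psi_bij) kG kH); exists f => //.
  exact/(induced_by_kappa_preP phiG phiH psi_bij f_bij).
- have [g g_bij g_psi] := (Rset_imsetP recG recH (bij_inj psi_bij) kG kH).1 R_psi.
  have psi_g : induced_by phiG phiH psi g.
    exact/(induced_by_kappa_preP phiG phiH psi_bij g_bij).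
  exists g; split=> //.
  exact/(induced_by_autP recG recH eG_simple eH_simple kG g_bij psi_g).
Qed.
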